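(* For integers $n\ge 0$ and $p$ with $p\le n+1$, $$\sum_{j,k}\genfrac{[}{]}{0pt}{}{n}{k}\binom{k}{j}\genfrac{\{}{\}}{0pt}{}{j+1}{p}(-1)^j=\begin{cases}0,&(n+1>p)\\(-1)^n,&(n+1=p).\end{cases}$$
   Context: Here $\genfrac{[}{]}{0pt}{}{n}{k}$ denotes the unsigned (absolute) Stirling number of the first kind and $\genfrac{\{}{\}}{0pt}{}{n}{k}$ the ordinary Stirling number of the second kind (Knuth's notation), with $\genfrac{[}{]}{0pt}{}{0}{0}=\genfrac{\{}{\}}{0pt}{}{0}{0}=1$, $\genfrac{[}{]}{0pt}{}{n}{0}=\genfrac{\{}{\}}{0pt}{}{n}{0}=0$ for $n>0$, and $\genfrac{[}{]}{0pt}{}{n}{k}=\genfrac{\{}{\}}{0pt}{}{n}{k}=0$ for $0\le n<k$. The double sum is over all integers $j,k$ with $0\le j\le k\le n$. *)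

From mathcomp Require Import all_boot all_order all_algebra.
Set Implicit Arguments. Unset Strict Implicit. Unset Printing Implicit Defensive.
Import GRing.Theory Num.Theory.

Fixpoint stirling1 (n k : nat) : nat :=
  match n, k with
  | 0, 0 => 1
  | 0, _.+1 => 0
  | _.+1, 0 => 0
  | n'.+1, k'.+1 => n' * stirling1 n' k'.+1 + stirling1 n' k'
  end.

Fixpoint stirling2 (n k : nat) : nat :=
  match n, k with
  | 0, 0 => 1
  | 0, _.+1 => 0
  | _.+1, 0 => 0
  | n'.+1, k'.+1 => k'.+1 * stirling2 n' k'.+1 + stirling2 n' k'
  end.

Definition stirling2z (n : nat) (p : int) : nat :=
  match p with
  | Posz k => stirling2 n k
  | Negz _ => 0
  end.

(* Summing over j first, the alternating binomial transform of
   j |-> {j+1, p} is the finite difference (-1)^k {k, p-1}.  What remains is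
   sum_k (-1)^k [n k] {k, p-1}, which is (-1)^n [p-1 = n] by the orthogonality
   of the two kinds of Stirling numbers.  Both identities follow by induction
   from the triangular recurrences. *)

From mathcomp Require Import all_boot all_order all_algebra.
From mathcomp Require Import zify ring.
Import GRing.Theory Num.Theory.
Local Open Scope ring_scope.

Lemma stirling1_small n k : (n < k)%N -> stirling1 n k = 0%N.
Proof. by elim: n k => [|n IHn] [|k] //= lt_nk; rewrite !IHn //; lia. Qed.

Lemma stirling2z0 (p : int) : (stirling2z 0 p)%:R = (p == 0)%:R :> int.
Proof. by case: p => [[|m]|m]. Qed.

Lemma stirling2zS k (p : int) :
  (stirling2z k.+1 p)%:R = p * (stirling2z k p)%:R + (stirling2z k (p - 1))%:R
  :> int.
Proof.
case: p => [[|m]|m].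
- by rewrite mul0r add0r.
- have -> : m.+1%:Z - 1 = m by lia.
  by rewrite /= natrD natrM natz.
- have -> : Negz m - 1 = Negz m.+1 by lia.
  by rewrite mulr0 addr0.
Qed.

Lemma sum_binS (R : pzSemiRingType) (a : nat -> R) k :
  \sum_(0 <= j < k.+2) 'C(k.+1, j)%:R * a j =
  \sum_(0 <= j < k.+1) 'C(k, j)%:R * a j
    + \sum_(0 <= j < k.+1) 'C(k, j)%:R * a j.+1.
Proof.
rewrite big_nat_recl // bin0.
under eq_bigr do rewrite binS natrD mulrDl.
rewrite big_split /= addrA; congr (_ + _).
rewrite [in RHS]big_nat_recl // bin0; congr (_ + _).
by rewrite big_nat_recr //= bin_small // mul0r addr0.
Qed.

Lemma sum_bin_stirling2z k (p : int) :
  \sum_(0 <= j < k.+1) 'C(k, j)%:R * ((-1) ^+ j * (stirling2z j.+1 p)%:R)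
  = (-1) ^+ k * (stirling2z k (p - 1))%:R :> int.
Proof.
elim: k p => [|k IHk] p.
  rewrite big_nat1 bin0 stirling2zS stirling2z0.
  by case: eqP => [->|_]; rewrite ?mul0r ?mulr0; ring.
have shifted_term j :
    'C(k, j)%:R * ((-1) ^+ j.+1 * (stirling2z j.+2 p)%:R)
    = - p * ('C(k, j)%:R * ((-1) ^+ j * (stirling2z j.+1 p)%:R))
      - 'C(k, j)%:R * ((-1) ^+ j * (stirling2z j.+1 (p - 1))%:R) :> int.
  by rewrite stirling2zS exprS; ring.
rewrite sum_binS (eq_bigr _ (fun j _ => shifted_term j)) big_split /=.
rewrite sumrN -mulr_sumr !IHk [in RHS]stirling2zS exprS.
have -> : p - 1 - 1 = p - 2 by ring.
ring.
Qed.

Definition stirling_orth n (m : int) : int :=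
  \sum_(0 <= k < n.+1) (-1) ^+ k * ((stirling1 n k)%:R * (stirling2z k m)%:R).

Lemma stirling_orthS n (m : int) :
  stirling_orth n.+1 m = (n%:R - m) * stirling_orth n m - stirling_orth n (m - 1).
Proof.
have n_stirling1n0 : (n * stirling1 n 0 = 0)%N by case: n => // n; rewrite muln0.
pose f k : int := (-1) ^+ k * ((stirling1 n k)%:R * (stirling2z k m)%:R).
have split_term k :
    (-1) ^+ k.+1 * ((stirling1 n.+1 k.+1)%:R * (stirling2z k.+1 m)%:R)
    = n%:R * f k.+1 - m * f k
      - (-1) ^+ k * ((stirling1 n k)%:R * (stirling2z k (m - 1))%:R) :> int.
  by rewrite /f /= natrD natrM stirling2zS !exprS; ring.
have shift : \sum_(0 <= k < n.+1) f k.+1 = stirling_orth n m - f 0.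
  rewrite /stirling_orth big_nat_recr //= big_nat_recl // {2}/f.
  by rewrite stirling1_small // mul0r mulr0 addr0 addrAC subrr add0r.
have n_f0 : n%:R * f 0 = 0.
  by rewrite /f expr0 mul1r mulrA -natrM n_stirling1n0 mul0r.
rewrite /stirling_orth big_nat_recl //= mul0r mulr0 add0r.
rewrite (eq_bigr _ (fun k _ => split_term k)) !big_split /= !sumrN.
rewrite -!mulr_sumr shift -/(stirling_orth n m) -/(stirling_orth n (m - 1)).
by rewrite mulrBr n_f0 subr0; ring.
Qed.

Lemma stirling_orthE n (m : int) :
  stirling_orth n m = (-1) ^+ n * (m == n%:Z)%:R.
Proof.
elim: n m => [|n IHn] m.
  by rewrite /stirling_orth big_nat1 stirling2z0 !mul1r.
rewrite stirling_orthS !IHn exprS.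
have -> : (m - 1 == n%:Z) = (m == n.+1%:Z) by apply/eqP/eqP; lia.
case: (m =P n%:Z) => [->|_] /=; last by ring.
have -> : (n%:Z == n.+1%:Z) = false by apply/eqP; lia.
by rewrite natz subrr /=; ring.
Qed.

Theorem mainTheorem5 (n : nat) (p : int) (hp : p <= (n.+1)%:Z) :
  \sum_(0 <= k < n.+1) \sum_(0 <= j < k.+1)
     ((stirling1 n k * 'C(k, j) * stirling2z j.+1 p)%:R * (-1) ^+ j : int)
  = (if p == (n.+1)%:Z then (-1) ^+ n else 0).
Proof.
have inner k : \sum_(0 <= j < k.+1)
    ((stirling1 n k * 'C(k, j) * stirling2z j.+1 p)%:R * (-1) ^+ j : int)
    = (-1) ^+ k * ((stirling1 n k)%:R * (stirling2z k (p - 1))%:R).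
  rewrite mulrCA -sum_bin_stirling2z mulr_sumr.
  by apply: eq_bigr => j _; rewrite !natrM; ring.
rewrite (eq_bigr _ (fun k _ => inner k)) -/(stirling_orth n (p - 1)).
rewrite stirling_orthE.
have -> : (p - 1 == n%:Z) = (p == n.+1%:Z) by apply/eqP/eqP; lia.
by case: (p == n.+1%:Z); rewrite ?mulr1 ?mulr0.
Qed.
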